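(* Let $G=(V,E,w)$ be an undirected weighted graph such that $w(e)<1$ for every $e\in E$ and every vertex has at most $3$ neighbors. Then $\chi_w(G)\le 2$.
   Context: An undirected weighted graph $G=(V,E,w)$ with $w:E\to[0,1]$ is regarded as a weighted digraph in which each edge $\{u,v\}$ gives arcs $(u,v)$ and $(v,u)$ of weight $w(\{u,v\})$. A $k$-coloring is a map $c:V\to\{1,\dots,k\}$, and $c[v]$ denotes the set of vertices with color $c(v)$. For $S\subseteq V$, $d^-_S(v)=\sum_{u\in S,(u,v)\in E}w(u,v)$. A weighted improper $k$-coloring is a $k$-coloring with $d^-_{c[v]}(v)<1$ for every $v$, and $\chi_w(G)$ is the minimum $k$ for which one exists. *)

From mathcomp Require Import all_boot all_order all_algebra.
Set Implicit Arguments. Unset Strict Implicit. Unset Printing Implicit Defensive.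
Import Order.TTheory GRing.Theory Num.Theory.
Local Open Scope ring_scope.

(* An undirected weighted graph on a finite vertex type V is given by a
   symmetric irreflexive adjacency relation e and a symmetric weight w
   (only its values on edges matter). Each edge {u,v} yields the arcs
   (u,v) and (v,u) of weight w u v = w v u. *)

Section WColor.
Variables (R : realFieldType) (V : finType) (e : rel V) (w : V -> V -> R).

Definition in_deg (S : {set V}) (v : V) : R :=
  \sum_(u in S | e u v) w u v.

Definition color_class (k : nat) (c : {ffun V -> 'I_k}) (v : V) : {set V} :=
  [set u | c u == c v].

Definition wimproper (k : nat) (c : {ffun V -> 'I_k}) : bool :=
  [forall v, in_deg (color_class c v) v < 1].

Definition wcolorable (k : nat) : bool :=
  [exists c : {ffun V -> 'I_k}, wimproper c].

Hypothesis e_irr : irreflexive e.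

Lemma wcolorable_card : wcolorable #|V|.
Proof.
apply/existsP; exists [ffun v => enum_rank v]; apply/forallP => v.
rewrite /in_deg big1 ?ltr01 // => u /andP[].
rewrite inE !ffunE => /eqP /enum_rank_inj -> ; by rewrite e_irr.
Qed.

Lemma wcolorable_ex : exists k, wcolorable k.
Proof. by exists #|V|; apply: wcolorable_card. Qed.

Definition chi_w : nat := ex_minn wcolorable_ex.

End WColor.

(* A 2-colouring minimising the total monochromatic weight is locally optimal:
   recolouring a vertex v changes that weight by twice the difference between
   the weight v receives from the other class and from its own class, so at a
   minimum the own-class weight never exceeds the other-class weight. With at
   most three neighbours, one of the two classes contains at most one
   neighbour of v, and a single arc has weight < 1; in either case the
   own-class weight of v is < 1. *)

From mathcomp Require Import all_boot all_order all_algebra.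
Import Order.TTheory GRing.Theory Num.Theory.
From mathcomp Require Import zify.
Set Implicit Arguments. Unset Strict Implicit. Unset Printing Implicit Defensive.
Local Open Scope ring_scope.

Lemma chi_w_le (R : realFieldType) (V : finType) (e : rel V) (w : V -> V -> R)
    (e_irr : irreflexive e) (k : nat) :
  wcolorable e w k -> (chi_w w e_irr <= k)%N.
Proof. by rewrite /chi_w; case: ex_minnP => m _; apply. Qed.

Lemma sum_lt1_card_le1 (R : realFieldType) (T : finType) (A : {set T})
    (f : T -> R) :
  (#|A| <= 1)%N -> (forall u, u \in A -> 0 <= f u < 1) ->
  \sum_(u in A) f u < 1.
Proof.
rewrite leq_eqVlt ltnS leqn0 => /orP[/cards1P[a ->] f01|/eqP/cards0_eq -> _].
  by rewrite big_set1; case/andP: (f01 a (set11 a)).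
by rewrite big_set0 ltr01.
Qed.

Definition other_color (i : 'I_2) : 'I_2 := if i == ord0 then ord_max else ord0.

Lemma eq_other_color (i j : 'I_2) : (j == other_color i) = (j != i).
Proof.
by case: i => [[|[|//]]] ?; case: j => [[|[|//]]] ?; rewrite /other_color.
Qed.

Section SparseNeighbourhood.

Variables (R : realFieldType) (V : finType) (e : rel V) (w : V -> V -> R).
Hypothesis w_range : forall u v, e u v -> 0 <= w u v < 1.

Definition in_nbhd (S : {set V}) (v : V) : {set V} := [set u in S | e u v].

Lemma in_degE (S : {set V}) (v : V) :
  in_deg e w S v = \sum_(u in in_nbhd S v) w u v.
Proof. by apply: eq_bigl => u; rewrite inE. Qed.

Lemma in_deg_lt1 (S : {set V}) (v : V) :
  (#|in_nbhd S v| <= 1)%N -> in_deg e w S v < 1.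
Proof.
move=> small; rewrite in_degE; apply: sum_lt1_card_le1 => // u.
by rewrite inE => /andP[_ /w_range].
Qed.

Lemma card_in_nbhd_setC (S : {set V}) (v : V) :
  (#|in_nbhd S v| + #|in_nbhd (~: S) v| = #|[set u | e u v]|)%N.
Proof.
rewrite -(cardsID S [set u | e u v]).
by congr (_ + _)%N; apply: eq_card => u; rewrite !inE andbC.
Qed.

Lemma in_deg_lt1_balanced (S : {set V}) (v : V) :
  (#|[set u | e u v]| <= 3)%N -> in_deg e w S v <= in_deg e w (~: S) v ->
  in_deg e w S v < 1.
Proof.
move=> deg3 balanced; have split_nbhd := card_in_nbhd_setC S v.
have [own_small|own_big] := leqP #|in_nbhd S v| 1; first exact: in_deg_lt1.
apply: le_lt_trans balanced _; apply: in_deg_lt1; lia.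
Qed.

Lemma wimproper_balanced (k : nat) (c : {ffun V -> 'I_k}) :
  (forall v, #|[set u | e u v]| <= 3)%N ->
  (forall v, in_deg e w (color_class c v) v <= in_deg e w (~: color_class c v) v) ->
  wimproper e w c.
Proof.
by move=> deg3 balanced; apply/forallP => v; apply: in_deg_lt1_balanced.
Qed.

End SparseNeighbourhood.

Section LocalSearch.

Variables (R : realFieldType) (V : finType) (e : rel V) (w : V -> V -> R).
Hypotheses (e_sym : symmetric e) (e_irr : irreflexive e).
Hypothesis w_sym : forall u v, w u v = w v u.

Definition mono_arc (c : {ffun V -> 'I_2}) (u x : V) : R :=
  if e u x && (c u == c x) then w u x else 0.

Definition mono_weight (c : {ffun V -> 'I_2}) : R :=
  \sum_u \sum_x mono_arc c u x.

Definition recolor (c : {ffun V -> 'I_2}) (v : V) : {ffun V -> 'I_2} :=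
  [ffun x => if x == v then other_color (c v) else c x].

Definition recolor_gain (c : {ffun V -> 'I_2}) (v y : V) : R :=
  if e v y then (if c y == c v then - w v y else w v y) else 0.

Lemma mono_arc_recolor c v u x :
  mono_arc (recolor c v) u x - mono_arc c u x =
  (if u == v then recolor_gain c v x else 0) +
  (if x == v then recolor_gain c v u else 0).
Proof.
rewrite /mono_arc /recolor_gain !ffunE.
have [->|uv] := eqVneq u v; have [->|xv] := eqVneq x v.
- by rewrite e_irr /= subrr addr0.
- rewrite [other_color _ == _]eq_sym eq_other_color addr0 [c x == _]eq_sym.
  by case: (e v x); case: (c v == c x); rewrite /= ?subr0 ?sub0r.
- rewrite eq_other_color add0r e_sym w_sym.
  by case: (e v u); case: (c u == c v); rewrite /= ?subr0 ?sub0r.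
- by rewrite subrr addr0.
Qed.

Lemma mono_weight_recolor c v :
  mono_weight (recolor c v) - mono_weight c = (\sum_y recolor_gain c v y) *+ 2.
Proof.
have sum_at_v (F : V -> V -> R) :
    \sum_u \sum_x (if u == v then F u x else 0) = \sum_x F v x.
  rewrite (bigD1 v) //= [X in _ + X]big1 ?addr0 => [|u /negPf ->].
    by apply: eq_bigr => x _; rewrite eqxx.
  by rewrite big1.
rewrite /mono_weight -sumrB.
under eq_bigr => u _ do rewrite -sumrB.
under eq_bigr => u _ do under eq_bigr => x _ do rewrite mono_arc_recolor.
under eq_bigr => u _ do rewrite big_split /=.
by rewrite big_split /= sum_at_v exchange_big /= sum_at_v mulr2n.
Qed.

Lemma sum_recolor_gain c v :
  \sum_y recolor_gain c v y =
  in_deg e w (~: color_class c v) v - in_deg e w (color_class c v) v.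
Proof.
rewrite /in_deg [X in X - _]big_mkcond [X in _ - X]big_mkcond -sumrB /=.
apply: eq_bigr => y _; rewrite /recolor_gain !inE e_sym w_sym.
by case: (e y v); case: (c y == c v); rewrite /= ?subr0 ?sub0r ?subrr.
Qed.

Lemma min_mono_weight_balanced (c : {ffun V -> 'I_2}) :
  (forall c', mono_weight c <= mono_weight c') ->
  forall v,
  in_deg e w (color_class c v) v <= in_deg e w (~: color_class c v) v.
Proof.
move=> cmin v; rewrite -subr_ge0 -sum_recolor_gain -(pmulrn_lge0 _ (ltn0Sn 1)).
by rewrite -mono_weight_recolor subr_ge0.
Qed.

Lemma exists_min_mono_weight :
  exists c : {ffun V -> 'I_2}, forall c', mono_weight c <= mono_weight c'.
Proof.
have [c _ cmin] := arg_minP mono_weight (isT : predT [ffun=> ord0]).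
by exists c => c'; apply: cmin.
Qed.

End LocalSearch.

Theorem lemma3p1 (R : realFieldType) (V : finType) (e : rel V)
    (w : V -> V -> R) (e_sym : symmetric e) (e_irr : irreflexive e)
    (w_sym : forall u v, w u v = w v u)
    (w_range : forall u v, e u v -> 0 <= w u v /\ w u v < 1)
    (deg3 : forall v, (#|[set u | e v u]| <= 3)%N) :
  (chi_w w e_irr <= 2)%N.
Proof.
apply: chi_w_le; apply/existsP.
have [c cmin] := exists_min_mono_weight e w.
exists c; apply: wimproper_balanced.
- by move=> u v /w_range[? ?]; apply/andP.
- move=> v; apply: leq_trans (deg3 v); apply: subset_leq_card.
  by apply/subsetP => u; rewrite !inE e_sym.
- exact: min_mono_weight_balanced.
Qed.
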